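(* Let $(X,d)$ be a compact metric space, $\lambda>0$, and $\ell\in\mathrm{LSC}(X)$ bounded with $\inf_X\ell=0$. Then: (i) if $u,v\in\mathrm{LSC}(X)$ are, respectively, a bounded subsolution and a bounded supersolution of $(\mathcal{G}_\lambda)$, then $u\le v$; (ii) the equation $(\mathcal{G}_\lambda)$ admits a unique (Lipschitz) solution.
   Context: $\mathrm{LSC}(X)$ is the set of real-valued lower semicontinuous functions on $X$. Global slope: $G[u](x)=\sup_{y\neq x}\frac{(u(x)-u(y))_+}{d(x,y)}$ if $u(x)<+\infty$, $G[u](x)=+\infty$ otherwise. Equation $(\mathcal{G}_\lambda)$: $\lambda u+G[u]=\ell$ on $X$ with $\inf_Xu=0$. A subsolution is $u:X\to\mathbb{R}\cup\{+\infty\}$ with $\inf_Xu=0$ and $\lambda u+G[u]\le\ell$ on $X$; a supersolution is a lower semicontinuous $v:X\to\mathbb{R}\cup\{+\infty\}$ with $\inf_Xv=0$ and $\lambda v+G[v]\ge\ell$ on $X$; a solution is a lower semicontinuous function that is both. *)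

From HB Require Import structures.
From mathcomp Require Import all_boot all_order all_algebra.
From mathcomp Require Import all_classical all_reals.
From mathcomp Require Import ereal.
From Stdlib Require List.
Set Implicit Arguments. Unset Strict Implicit. Unset Printing Implicit Defensive.
Import Order.TTheory GRing.Theory Num.Theory.
Local Open Scope classical_set_scope.
Local Open Scope ring_scope.

Section Defs.
Variables (R : realType) (X : Type) (d : X -> X -> R).

Definition is_metric : Prop :=
  (forall x y, d x y = 0 <-> x = y) /\
  (forall x y, d x y = d y x) /\
  (forall x y z, d x z <= d x y + d y z).

Definition dopen (A : X -> Prop) : Prop :=
  forall x, A x -> exists2 r : R, 0 < r & forall y, d x y < r -> A y.

Definition dcompact : Prop :=
  forall (I : Type) (U : I -> X -> Prop),
    (forall i, dopen (U i)) -> (forall x, exists i, U i x) ->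
    exists s : list I, forall x, exists i, List.In i s /\ U i x.

Definition lsc (u : X -> \bar R) : Prop :=
  forall x (c : R), (c%:E < u x)%E ->
    exists2 r : R, 0 < r & forall y, d x y < r -> (c%:E < u y)%E.

Definition bounded_fun (f : X -> R) : Prop :=
  exists M : R, forall x, `|f x| <= M.

Definition lipschitz (f : X -> R) : Prop :=
  exists L : R, forall x y, `|f x - f y| <= L * d x y.

Definition elift (f : X -> R) : X -> \bar R := fun x => (f x)%:E.

Definition inf_zero (u : X -> \bar R) : Prop := ereal_inf (range u) = 0%E.

(* global slope G[u](x); the value 0 is added to the supremum so that
   the supremum of the (nonnegative) quotients is 0 when X = {x}. *)
Definition gslope (u : X -> \bar R) (x : X) : \bar R :=
  if u x is +oo%E then +oo%E else
  ereal_sup (0%E |` [set (maxe (u x - u y) 0 * ((d x y)^-1)%:E)%E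
                      | y in [set y | y <> x]]).

Definition subsolution (lam : R) (l : X -> R) (u : X -> \bar R) : Prop :=
  inf_zero u /\ forall x, (lam%:E * u x + gslope u x <= (l x)%:E)%E.

Definition supersolution (lam : R) (l : X -> R) (v : X -> \bar R) : Prop :=
  lsc v /\ inf_zero v /\ forall x, ((l x)%:E <= lam%:E * v x + gslope v x)%E.

Definition solution (lam : R) (l : X -> R) (u : X -> \bar R) : Prop :=
  subsolution lam l u /\ supersolution lam l u.

End Defs.

From HB Require Import structures.
From mathcomp Require Import all_boot all_order all_algebra.
From mathcomp Require Import all_classical all_reals.
From mathcomp Require Import ereal.
From Stdlib Require List.
From mathcomp Require Import lra.
Import Order.TTheory GRing.Theory Num.Theory.
Local Open Scope classical_set_scope.
Local Open Scope ring_scope.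
Set Implicit Arguments. Unset Strict Implicit.

(* Written pointwise, G[u] <= l - lam u says u x - u y <= (l x - lam u x) d(x, y)
   for all y, so nonnegative subsolutions are uniformly Lipschitz because l is
   bounded.  Comparison: the lower semicontinuous function v - u attains its
   minimum at some x0 of the compact space; if u x0 > v x0, the supersolution
   inequality at x0 yields y with v x0 - v y > (l x0 - lam u x0) d(x0, y), which
   is >= u x0 - u y, contradicting minimality.  Existence is Perron's method: the
   supremum U of all nonnegative subsolutions is a subsolution, because the
   constraint (1 + lam d(x, y)) u x <= u y + l x d(x, y) is monotone in u x.  If
   the supersolution inequality failed at x0, then max(U, U x0 + eta - K d(x0, .))
   with G[U](x0) < K < l x0 - lam U x0 and eta small would be a larger
   subsolution; lower semicontinuity of l keeps the cone admissible where it is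
   active.  U vanishes where l does, a point that exists by compactness, and
   uniqueness is comparison applied both ways. *)

Lemma list_argmin (disp : Order.disp_t) (T : orderType disp) (A : Type)
    (f : A -> T) (x0 : A) (s : list A) :
  exists2 y, List.In y (x0 :: s) & forall z, List.In z (x0 :: s) -> (f y <= f z)%O.
Proof.
elim: s x0 => [|a s IH] x0; first by exists x0 => [|z [<-|]]; [left | |].
have [y ys ymin] := IH a; have [le_x0y|lt_yx0] := leP (f x0) (f y).
  by exists x0 => [|z [<-//|/ymin]]; [left | exact: le_trans].
by exists y => [|z [<-|/ymin//]]; [right | exact: ltW].
Qed.

Section InfZero.
Variables (R : realType) (X : Type).

Lemma inf_zero_ge0 (w : X -> \bar R) x : inf_zero w -> (0 <= w x)%E.
Proof. by move=> winf; rewrite -winf; apply: ereal_inf_lbound; exists x. Qed.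

Lemma inf_zero_elift_ge0 (u : X -> R) x : inf_zero (elift u) -> 0 <= u x.
Proof. by move=> /(inf_zero_ge0 x); rewrite lee_fin. Qed.

Lemma inf_zero_elift (u : X -> R) x0 :
  (forall x, 0 <= u x) -> u x0 = 0 -> inf_zero (elift u).
Proof.
move=> u0 ux0; apply/eqP; rewrite eq_le; apply/andP; split.
  by apply: ge_ereal_inf; exists (elift u x0); [exists x0 | rewrite /elift ux0].
by apply: le_ereal_inf_tmp => _ [y _ <-]; rewrite lee_fin.
Qed.

Lemma inf_zero_inhabited (w : X -> \bar R) : inf_zero w -> inhabited X.
Proof.
move=> winf; apply: contrapT => noX; move: winf; rewrite /inf_zero.
suff -> : range w = set0 by rewrite ereal_inf0.
by apply/seteqP; split => // z [x _ _]; case: noX.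
Qed.

End InfZero.

Section LowerSemicontinuity.
Variables (R : realType) (X : Type) (d : X -> X -> R).

Lemma lsc_attains_min (f : X -> R) (x : X) :
  dcompact d -> lsc d (elift f) -> exists x0, forall y, f x0 <= f y.
Proof.
move=> dc flsc; apply: contrapT => /forallNP no_min.
have below z : exists y, f y < f z.
  apply: contrapT => /forallNP above; apply: (no_min z) => y.
  by rewrite leNgt; apply/negP/above.
have above_open y : dopen d (fun z => f y < f z).
  by move=> z; rewrite -lte_fin; apply: flsc.
have [s cover] := dc _ _ above_open below.
case: s cover => [|a s] cover; first by have [? []] := cover x.
have [y0 y0s y0min] := list_argmin f a s.
have [y [ys ltyy0]] := cover y0.
by have := y0min y ys; rewrite leNgt ltyy0.
Qed.

Lemma lsc_add (u v : X -> R) :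
  lsc d (elift u) -> lsc d (elift v) -> lsc d (elift (fun x => u x + v x)).
Proof.
move=> ulsc vlsc x c; rewrite /elift lte_fin => ltc.
pose e := (u x + v x - c) / 2.
have [ru ru0 hu] := ulsc x (u x - e) ltac:(rewrite /elift lte_fin /e; lra).
have [rv rv0 hv] := vlsc x (v x - e) ltac:(rewrite /elift lte_fin /e; lra).
exists (Num.min ru rv) => [|y]; first by rewrite lt_min ru0 rv0.
rewrite lt_min => /andP[/hu + /hv]; rewrite /elift /e !lte_fin; lra.
Qed.

Lemma lsc_inf_zero_root (f : X -> R) :
  dcompact d -> lsc d (elift f) -> inf_zero (elift f) -> exists x, f x = 0.
Proof.
move=> dc flsc finf; have [x] := inf_zero_inhabited finf.
have [x0 x0min] := lsc_attains_min x dc flsc.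
have : ((f x0)%:E <= ereal_inf (range (elift f)))%E.
  by apply: le_ereal_inf_tmp => _ [y _ <-]; rewrite lee_fin.
rewrite finf lee_fin => fx0_le0; exists x0; apply/eqP.
by rewrite eq_le fx0_le0 inf_zero_elift_ge0.
Qed.

End LowerSemicontinuity.

Section Metric.
Variables (R : realType) (X : Type) (d : X -> X -> R).
Hypothesis dm : is_metric d.

Lemma dist_xx x : d x x = 0.
Proof. exact: (proj1 dm x x).2. Qed.

Lemma distC x y : d x y = d y x.
Proof. exact: (proj2 dm).1. Qed.

Lemma dist_triangle x y z : d x z <= d x y + d y z.
Proof. exact: (proj2 dm).2. Qed.

Lemma dist_ge0 x y : 0 <= d x y.
Proof. by have := dist_triangle x y x; rewrite dist_xx (distC y x); lra. Qed.

Lemma dist_gt0 x y : y <> x -> 0 < d x y.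
Proof.
move=> yx; rewrite lt_def dist_ge0 andbT; apply/eqP => /(proj1 dm x y) xy.
by apply: yx.
Qed.

Lemma gslope_ge0 (u : X -> R) x : (0 <= gslope d (elift u) x)%E.
Proof. by apply: ereal_sup_ubound; left. Qed.

Lemma gslope_leP (u : X -> R) x (b : R) : 0 <= b ->
  (gslope d (elift u) x <= b%:E)%E <-> forall y, u x - u y <= b * d x y.
Proof.
rewrite /gslope /elift /= => b0; split => [le_b y | slope].
  have [->|yx] := pselect (y = x); first by rewrite dist_xx subrr mulr0.
  have : ((Num.max (u x - u y) 0 / d x y)%:E <= b%:E)%E.
    apply: le_trans le_b; apply: ereal_sup_ubound; right.
    by exists y => //; rewrite EFinM EFin_max EFinB.
  rewrite lee_fin ler_pdivrMr ?dist_gt0 //; apply: le_trans.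
  by rewrite le_max lexx.
apply: ge_ereal_sup => _ [->|[y yx <-]]; first by rewrite lee_fin.
rewrite -EFinB -EFin_max -EFinM lee_fin ler_pdivrMr ?dist_gt0 //.
by rewrite ge_max slope mulr_ge0 ?dist_ge0.
Qed.

Lemma lipschitz_of_le (u : X -> R) (L : R) :
  (forall x y, u x - u y <= L * d x y) -> lipschitz d u.
Proof.
move=> le_L; exists L => x y; rewrite ler_norml le_L andbT.
by have := le_L y x; rewrite distC; lra.
Qed.

Lemma lipschitzN (u : X -> R) : lipschitz d u -> lipschitz d (fun x => - u x).
Proof. by case=> L uL; exists L => x y; rewrite -opprD normrN. Qed.

Lemma lipschitz_lsc (u : X -> R) : lipschitz d u -> lsc d (elift u).
Proof.
case=> L uL x c; rewrite /elift lte_fin => ltc.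
have L1 : 0 < `|L| + 1 by rewrite ltr_wpDl.
exists ((u x - c) / (`|L| + 1)) => [|y]; first by rewrite divr_gt0 ?subr_gt0.
rewrite ltr_pdivlMr // lte_fin => dxy.
have : L * d x y <= `|L| * d x y by rewrite ler_wpM2r ?dist_ge0 ?ler_norm.
have : `|L| * d x y <= `|L| * d x y + d x y by rewrite lerDl dist_ge0.
have := uL x y; rewrite ler_norml => /andP[_ ulip].
rewrite mulrDr mulr1 mulrC in dxy; lra.
Qed.

End Metric.

Section Equation.
Variables (R : realType) (X : Type) (d : X -> X -> R) (lam : R) (l : X -> R).
Hypotheses (dm : is_metric d) (lam0 : 0 < lam).

Definition subsol_at (u : X -> R) x :=
  lam * u x <= l x /\ forall y, u x - u y <= (l x - lam * u x) * d x y.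

Lemma subsolutionP (u : X -> R) :
  subsolution d lam l (elift u) <-> inf_zero (elift u) /\ forall x, subsol_at u x.
Proof.
rewrite /subsolution /elift; split => -[uinf su]; split => // x.
  move: (su x) (gslope_ge0 d u x); rewrite -EFinM -leeBrDl // -EFinB => le_g g0.
  have lx : lam * u x <= l x by rewrite -subr_ge0 -lee_fin (le_trans g0 le_g).
  by split => //; apply/(gslope_leP dm); rewrite ?subr_ge0.
have [lx slope] := su x; rewrite -EFinM -leeBrDl // -EFinB.
by apply/(gslope_leP dm); rewrite ?subr_ge0.
Qed.

Lemma supersolutionP (v : X -> R) :
  supersolution d lam l (elift v) <->
  [/\ lsc d (elift v), inf_zero (elift v) &
      forall x, ((l x - lam * v x)%:E <= gslope d (elift v) x)%E].
Proof.
have slopeE x : ((l x)%:E <= (lam%:E * elift v x) + gslope d (elift v) x)%E =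
                ((l x - lam * v x)%:E <= gslope d (elift v) x)%E.
  by rewrite /elift -EFinM -leeBlDl // -EFinB.
rewrite /supersolution; split => [[vlsc [vinf sv]] | [vlsc vinf sv]].
  by split => // x; rewrite -slopeE.
by split => //; split => // x; rewrite slopeE.
Qed.

Lemma subsolution_real (w : X -> \bar R) :
  subsolution d lam l w -> exists v : X -> R, w = elift v.
Proof.
case=> winf sw; exists (fun x => fine (w x)); apply: funext => x.
(* Where w = +oo, both lam * w and G[w] are +oo, which cannot be <= l. *)
have := sw x; have := inf_zero_ge0 x winf; rewrite /elift /gslope.
case: (w x) => [r| |] //= _.
by rewrite mulry gtr0_sg // mul1e.
Qed.

Lemma subsol_at_ge (u w : X -> R) x :
  (forall y, u y <= w y) -> w x = u x -> subsol_at u x -> subsol_at w x.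
Proof.
move=> le_uw wx [ux slope]; rewrite /subsol_at wx; split => // y.
by apply: le_trans (slope y); rewrite lerD2l lerN2.
Qed.

Lemma subsol_at_cone x0 (c K : R) y : 0 <= K ->
  K <= l y - lam * (c - K * d x0 y) -> subsol_at (fun z => c - K * d x0 z) y.
Proof.
move=> K0 le_K; split => [|z]; first lra.
have : K * d x0 z <= K * d x0 y + K * d y z.
  by rewrite -mulrDr ler_wpM2l ?dist_triangle.
have : K * d y z <= (l y - lam * (c - K * d x0 y)) * d y z.
  by rewrite ler_wpM2r ?dist_ge0.
lra.
Qed.

Hypothesis lb : bounded_fun l.

Lemma subsol_lipschitz (u : X -> R) :
  (forall x, 0 <= u x) -> (forall x, subsol_at u x) -> lipschitz d u.
Proof.
move=> u0 su; have [M lM] := lb; apply: (lipschitz_of_le dm (L := M)) => x y.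
have [_ slope] := su x; apply: le_trans (slope y) _.
rewrite ler_wpM2r ?(dist_ge0 dm) //.
have := lM x; rewrite ler_norml => /andP[_ lxM].
by have := mulr_ge0 (ltW lam0) (u0 x); lra.
Qed.

Hypothesis dc : dcompact d.

Lemma subsolution_le_supersolution (u v : X -> R) :
  subsolution d lam l (elift u) -> supersolution d lam l (elift v) ->
  forall x, u x <= v x.
Proof.
move=> /subsolutionP[uinf su] /supersolutionP[vlsc _ sv] x.
have u0 y : 0 <= u y by apply: inf_zero_elift_ge0.
have Nulsc := lipschitz_lsc dm (lipschitzN (subsol_lipschitz u0 su)).
have [x0 x0min] := lsc_attains_min x dc (lsc_add vlsc Nulsc).
rewrite leNgt; apply/negP => ltvu.
have ltvu0 : v x0 < u x0 by have := x0min x; lra.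
have [lu0 slope] := su x0.
have lt_slope : ((l x0 - lam * u x0)%:E < gslope d (elift v) x0)%E.
  by apply: lt_le_trans (sv x0); rewrite lte_fin ltrD2l ltrN2 ltr_pM2l.
have /existsNP[y] : ~ forall y, v x0 - v y <= (l x0 - lam * u x0) * d x0 y.
  move=> /(gslope_leP dm); rewrite subr_ge0 => /(_ lu0) le_slope.
  by move: lt_slope; rewrite ltNge le_slope.
move/negP; rewrite -ltNge => descent.
by have := slope y; have := x0min y; lra.
Qed.

Hypotheses (llsc : lsc d (elift l)) (linf : inf_zero (elift l)).

Definition subsols : set (X -> R) :=
  [set u | (forall x, 0 <= u x) /\ forall x, subsol_at u x].

Definition perron x := sup [set u x | u in subsols].

Lemma subsols0 : subsols (fun=> 0).
Proof.
have l0 x : 0 <= l x by apply: inf_zero_elift_ge0.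
split=> // x; split => [|y]; first by rewrite mulr0.
by rewrite subrr mulr0 subr0 mulr_ge0 ?(dist_ge0 dm).
Qed.

Lemma perron_has_sup x : has_sup [set u x | u in subsols].
Proof.
split; first by exists 0, (fun=> 0); first exact: subsols0.
exists (l x / lam) => _ [u [_ su] <-].
by rewrite ler_pdivlMr // mulrC; case: (su x).
Qed.

Lemma perron_ub u x : subsols u -> u x <= perron x.
Proof. by move=> Su; apply: sup_upper_bound (perron_has_sup x) _ _; exists u. Qed.

Lemma perron_subsol : subsols perron.
Proof.
split=> [x|x]; first exact: perron_ub subsols0.
have ne y : [set u y | u in subsols] !=set0 by case: (perron_has_sup y).
split=> [|y].
  rewrite -ler_pdivlMl //; apply: ge_sup (ne x) _ => _ [u [_ su] <-].
  by rewrite ler_pdivlMl //; case: (su x).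
have k0 : 0 < 1 + lam * d x y.
  by apply: ltr_pwDl; last exact: mulr_ge0 (ltW lam0) (dist_ge0 dm x y).
suff : perron x * (1 + lam * d x y) <= perron y + l x * d x y by lra.
rewrite -ler_pdivlMr //; apply: ge_sup (ne x) _ => _ [u Su <-].
rewrite ler_pdivlMr //; have [_ su] := Su; have [_ slope] := su x.
have := slope y; have := perron_ub y Su; lra.
Qed.

Lemma perron_bump x0 a : 0 <= a -> a < l x0 - lam * perron x0 ->
  (forall y, perron x0 - perron y <= a * d x0 y) ->
  exists2 w, subsols w & perron x0 < w x0.
Proof.
set b := l x0 - lam * perron x0 => a0 ab slope.
pose K := (a + b) / 2; pose eps := (b - K) / 2.
have [r r0 l_near] : exists2 r, 0 < r & forall y, d x0 y < r -> l x0 - eps < l y.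
  have : ((l x0 - eps)%:E < elift l x0)%E by rewrite lte_fin /eps /K; lra.
  by case/llsc => r r0 near; exists r => // y /near; rewrite lte_fin.
pose eta := Num.min ((K - a) * r) (eps / lam).
have Ka : a < K by rewrite /K; lra.
have eps0 : 0 < eps by rewrite /eps /K; lra.
have eta0 : 0 < eta.
  by rewrite lt_min; apply/andP; split; [apply: mulr_gt0 | apply: divr_gt0] => //; lra.
have eta_r : eta <= (K - a) * r by rewrite ge_min lexx.
have eta_lam : lam * eta <= eps by rewrite -ler_pdivlMl // mulrC ge_min lexx orbT.
pose c := perron x0 + eta.
pose w y := Num.max (perron y) (c - K * d x0 y).
have [P0 Psub] := perron_subsol.
have le_w y : perron y <= w y by rewrite le_max lexx.
exists w; last by rewrite lt_max (dist_xx dm) mulr0 subr0 ltrDl eta0 orbT.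
split=> [y|y]; first exact: le_trans (le_w y).
have [le_perron|lt_perron] := leP (c - K * d x0 y) (perron y).
  by apply: subsol_at_ge le_w _ (Psub y); rewrite /w max_l.
have cone_w z : c - K * d x0 z <= w z by rewrite le_max lexx orbT.
apply: subsol_at_ge cone_w _ _; first by rewrite /w max_r ?ltW.
(* The cone is active only where (K - a) d(x0, y) < eta, hence within r of x0. *)
have near : d x0 y < r.
  have : (K - a) * d x0 y < (K - a) * r.
    by have := slope y; rewrite mulrBl /c in lt_perron *; lra.
  by rewrite ltr_pM2l // subr_gt0.
have K0 : 0 <= K by lra.
apply: subsol_at_cone => //.
have : lam * (c - K * d x0 y) <= lam * c.
  by rewrite ler_pM2l // lerBlDr lerDl mulr_ge0 ?(dist_ge0 dm).
have lam_c : lam * c = lam * perron x0 + lam * eta by rewrite mulrDr.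
have := l_near y near; rewrite /eps /K /b in eta_lam *; lra.
Qed.

Lemma perron_supersol x :
  ((l x - lam * perron x)%:E <= gslope d (elift perron) x)%E.
Proof.
rewrite leNgt; apply/negP.
move: (gslope_ge0 d perron x) (@gslope_leP _ _ _ dm perron x).
case: (gslope d (elift perron) x) => [g| |] //.
rewrite !lee_fin lte_fin => g0 slopeP lt_g.
have [w Sw] := perron_bump g0 lt_g ((slopeP g g0).1 (lexx _)).
by rewrite ltNge perron_ub.
Qed.

Lemma perron_root : exists x, perron x = 0.
Proof.
have [x lx] := lsc_inf_zero_root dc llsc linf; exists x.
have [P0 Psub] := perron_subsol; have [le_l _] := Psub x.
by apply/eqP; rewrite eq_le P0 andbT -(ler_pM2l lam0) mulr0 -lx.
Qed.

End Equation.

Theorem proposition3p13 (R : realType) (X : Type) (d : X -> X -> R)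
  (lam : R) (l : X -> R) :
  is_metric d -> dcompact d -> 0 < lam ->
  lsc d (elift l) -> bounded_fun l -> inf_zero (elift l) ->
  (forall u v : X -> R,
      lsc d (elift u) -> lsc d (elift v) -> bounded_fun u -> bounded_fun v ->
      subsolution d lam l (elift u) -> supersolution d lam l (elift v) ->
      forall x, u x <= v x) /\
  (exists u : X -> R,
      lipschitz d u /\ solution d lam l (elift u) /\
      forall w : X -> \bar R, solution d lam l w -> w = elift u).
Proof.
move=> dm dc lam0 llsc lb linf.
have comparison := subsolution_le_supersolution dm lam0 lb dc.
split=> [u v _ _ _ _|]; first exact: comparison.
have [P0 Psub] := perron_subsol dm lam0 linf.
have [x0 Px0] := perron_root dm lam0 dc llsc linf.
have Plip := subsol_lipschitz dm lam0 lb P0 Psub.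
have Psol : solution d lam l (elift (perron d lam l)).
  split; first by apply/(subsolutionP _ _ dm); split; first exact: inf_zero_elift P0 Px0.
  apply/supersolutionP; split; first exact: lipschitz_lsc.
    exact: inf_zero_elift P0 Px0.
  exact: perron_supersol.
exists (perron d lam l); split=> //; split=> // w [sw Sw].
have [v wv] := subsolution_real lam0 sw; subst w.
congr elift; apply: funext => x; apply/le_anti.
by rewrite (comparison _ _ sw Psol.2) (comparison _ _ Psol.1 Sw).
Qed.
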